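(* Let $n$ be a nonnegative integer and $a,c\in\mathbb{C}$ such that all series and quotients below are defined (no lower parameter zero or a negative integer). Then \[ {}_3F_2\!\left(\left.{-n,\frac{a}{2},\frac{a+1}{2} \atop a,c}\right| 4\right) =\frac{(-1)^n(1+a-c)_n}{(c)_n}\,{}_3F_2\!\left(\left.{-\frac{n}{2},\frac{1-n}{2},1-c-n \atop c-a-n,1+a-c}\right| 4\right). \]
   Context: For $a\in\mathbb{C}$, $(a)_0=1$ and $(a)_k=a(a+1)\cdots(a+k-1)$ for $k\ge1$. The hypergeometric series is ${}_rF_s\!\left(\left.{\alpha_1,\ldots,\alpha_r\atop \beta_1,\ldots,\beta_s}\right|z\right)=\sum_{k\ge0}\frac{(\alpha_1)_k\cdots(\alpha_r)_k}{k!(\beta_1)_k\cdots(\beta_s)_k}z^k$, with no lower parameter zero or a negative integer. Since one of $-\frac n2,\frac{1-n}{2}$ is a nonpositive integer, the right-hand series terminates. *)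

From HB Require Import structures.
From mathcomp Require Import all_boot all_order all_algebra.
From mathcomp Require Import reals.
From mathcomp Require Import complex.
Set Implicit Arguments. Unset Strict Implicit. Unset Printing Implicit Defensive.
Import Order.TTheory GRing.Theory Num.Theory.
Local Open Scope ring_scope.

Definition poch {F : ringType} (a : F) (k : nat) : F :=
  \prod_(i < k) (a + i%:R).

Definition hg32_term {F : fieldType} (a1 a2 a3 b1 b2 z : F) (k : nat) : F :=
  (poch a1 k * poch a2 k * poch a3 k)
  / ((k`!)%:R * poch b1 k * poch b2 k) * z ^+ k.

(* Partial sum of the first N terms.  For a terminating series (all terms
   with index >= N vanish) this is the value of the series. *)
Definition hg32_sum {F : fieldType} (N : nat) (a1 a2 a3 b1 b2 z : F) : F :=
  \sum_(k < N) hg32_term a1 a2 a3 b1 b2 z k.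

Definition not_nonpos_int {F : ringType} (x : F) : Prop :=
  forall m : nat, x <> - (m%:R).

From HB Require Import structures.
From mathcomp Require Import all_boot all_order all_algebra.
From mathcomp Require Import reals complex.
From mathcomp Require Import ring zify.
Import Order.TTheory GRing.Theory Num.Theory.
Local Open Scope ring_scope.

Set Implicit Arguments. Unset Strict Implicit. Unset Printing Implicit Defensive.

(* Multiply the left side by (c)_n / n! and put N = c + n - 1.  With the
   duplication formula (x/2)_k ((x+1)/2)_k 4^k = (x)_2k, its k-th term becomes
   (-1)^k C(a+2k-1, k) C(N, n-k), and the j-th term of the right side becomes
   (-1)^n C(N, j) C(a+2n-1-N-j, n-2j), with generalized binomial coefficients
   C(x, m).  The two sums L_n(N) and (-1)^n R_n(N) agree for n = 0 and at N = 0,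
   and by Pascal's rule in N obey the same recurrence
   S_n+1(N+1) = S_n+1(N) + S_n(N).  So by induction on n they agree at every
   natural N; being polynomials in N, they agree everywhere. *)

Section Pochhammer.
Variable R : comNzRingType.
Implicit Types x : R.

Lemma poch0 x : poch x 0 = 1.
Proof. by rewrite /poch big_ord0. Qed.

Lemma pochS x k : poch x k.+1 = poch x k * (x + k%:R).
Proof. by rewrite /poch big_ord_recr. Qed.

Lemma pochSl x k : poch x k.+1 = x * poch (x + 1) k.
Proof.
rewrite /poch big_ord_recl addr0; congr (_ * _).
by apply: eq_bigr => i _; rewrite lift0 -natr1 addrA addrAC.
Qed.

Lemma pochD x m k : poch x (m + k) = poch x m * poch (x + m%:R) k.
Proof.
elim: k => [|k IHk]; first by rewrite addn0 poch0 mulr1.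
by rewrite addnS !pochS IHk natrD addrA mulrA.
Qed.

Lemma poch_opp_nat m k : (m < k)%N -> poch (- m%:R : R) k = 0.
Proof. by move=> lt_mk; rewrite /poch (bigD1 (Ordinal lt_mk)) //= addNr mul0r. Qed.

Lemma poch_reflect x k : poch x k = (-1) ^+ k * poch (1 - x - k%:R) k.
Proof.
elim: k x => [|k IHk] x; first by rewrite !poch0 mul1r.
rewrite pochS IHk pochSl exprS -natr1.
have -> : 1 - x - (k%:R + 1) + 1 = 1 - x - k%:R by ring.
ring.
Qed.

Lemma poch_fact m k : poch (m%:R + 1 : R) k * m`!%:R = (m + k)`!%:R.
Proof.
elim: k => [|k IHk]; first by rewrite poch0 mul1r addn0.
rewrite pochS mulrAC IHk addnS factS natrM mulrC; congr (_ * _).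
by rewrite -addn1 !natrD; ring.
Qed.

End Pochhammer.

Lemma poch_neq0 (R : idomainType) (x : R) k : not_nonpos_int x -> poch x k != 0.
Proof.
move=> x_ok; elim: k => [|k IHk]; first by rewrite poch0 oner_eq0.
by rewrite pochS mulf_neq0 // addr_eq0; apply/eqP/x_ok.
Qed.

Lemma poch_duplication (F : fieldType) (x : F) k : 2%:R != 0 :> F ->
  poch (x / 2%:R) k * poch ((x + 1) / 2%:R) k * 4%:R ^+ k = poch x (2 * k).
Proof.
move=> two_neq0; elim: k => [|k IHk]; first by rewrite muln0 !poch0 expr0 !mulr1.
rewrite mulnS !addSn add0n [poch x _]pochS [poch x _]pochS -IHk !pochS exprS.
have -> : (4%:R : F) = 2%:R * 2%:R by rewrite -natrM.
by rewrite -natr1 natrM; field.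
Qed.

Lemma natr_fact_neq0 (R : numDomainType) m : m`!%:R != 0 :> R.
Proof. by rewrite pnatr_eq0 -lt0n fact_gt0. Qed.

Section Binomial.
Variable F : numFieldType.
Implicit Types (x : F) (m : int).

Definition binom x m : F :=
  if m is Posz k then poch (x - k%:R + 1) k / k`!%:R else 0.

Lemma binom_poch y k : binom (y + k%:R - 1) k = poch y k / k`!%:R.
Proof. by rewrite /binom; congr (poch _ _ / _); ring. Qed.

Lemma binom0 x : binom x 0 = 1.
Proof. by rewrite -[0]/(Posz 0) /binom poch0 divr1. Qed.

Lemma binom_neg x m : m < 0 -> binom x m = 0.
Proof. by case: m. Qed.

Lemma binomS x m : binom (x + 1) (m + 1) = binom x (m + 1) + binom x m.
Proof.
case: m => [k|[|k]]; last 2 first.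
- by rewrite NegzE addNr !binom0 addr0.
- by rewrite !binom_neg ?addr0 //; lia.
rewrite -PoszD addn1 /binom.
have -> : x + 1 - k.+1%:R + 1 = x - k%:R + 1 by rewrite -natr1; ring.
rewrite pochS pochSl factS natrM invfM.
have -> : x - k.+1%:R + 1 + 1 = x - k%:R + 1 by rewrite -natr1; ring.
have Sk_neq0 : k.+1%:R != 0 :> F by rewrite pnatr_eq0.
have := natr_fact_neq0 F k.
by rewrite -natr1 in Sk_neq0 * => ?; field; apply/andP.
Qed.

Lemma binom_small (n k : nat) : (n < k)%N -> binom n%:R k = 0.
Proof.
move=> lt_nk; rewrite /binom.
have -> : n%:R - k%:R + 1 = - (k - n.+1)%:R :> F by rewrite natrB // -natr1; ring.
by rewrite poch_opp_nat ?mul0r // ltn_subrL (leq_ltn_trans _ lt_nk).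
Qed.

Lemma binom0n m : binom 0 m = (m == 0)%:R.
Proof.
case: m => [[|k]|k]; first by rewrite binom0.
- by rewrite (binom_small (n := 0)).
- by rewrite binom_neg.
Qed.

Lemma binom_pascal2 x m :
  binom (x - 1) m + binom (x - 2%:R) (m - 2%:R) = binom x m - binom (x - 2%:R) (m - 1).
Proof.
have pascal y l : binom y l = binom (y - 1) l + binom (y - 1) (l - 1).
  by have := binomS (y - 1) (l - 1); rewrite !subrK.
rewrite [binom x m]pascal [binom (x - 1) (m - 1)]pascal.
have -> : x - 1 - 1 = x - 2%:R by ring.
have -> : m - 1 - 1 = m - 2%:R by ring.
ring.
Qed.

End Binomial.

Arguments binom : simpl never.

Section PolynomialFunctions.
Variable R : numDomainType.
Implicit Types f g : R -> R.

Definition polyfun f := exists p : {poly R}, f =1 horner p.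

Lemma polyfun_cst c : polyfun (fun=> c).
Proof. by exists c%:P => x; rewrite hornerC. Qed.

Lemma polyfun_id : polyfun (fun x => x).
Proof. by exists 'X => x; rewrite hornerX. Qed.

Lemma polyfunD f g : polyfun f -> polyfun g -> polyfun (fun x => f x + g x).
Proof. by move=> [p fE] [q gE]; exists (p + q) => x; rewrite hornerD fE gE. Qed.

Lemma polyfunN f : polyfun f -> polyfun (fun x => - f x).
Proof. by move=> [p fE]; exists (- p) => x; rewrite hornerN fE. Qed.

Lemma polyfunM f g : polyfun f -> polyfun g -> polyfun (fun x => f x * g x).
Proof. by move=> [p fE] [q gE]; exists (p * q) => x; rewrite hornerM fE gE. Qed.

Lemma polyfun_sum I (r : seq I) (G : I -> R -> R) :
  (forall i, polyfun (G i)) -> polyfun (fun x => \sum_(i <- r) G i x).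
Proof.
move=> G_poly; elim: r => [|i r IHr]; first by exists 0 => x; rewrite big_nil horner0.
have [p sumE] := polyfunD (G_poly i) IHr.
by exists p => x; rewrite big_cons sumE.
Qed.

Lemma polyfun_prod I (r : seq I) (G : I -> R -> R) :
  (forall i, polyfun (G i)) -> polyfun (fun x => \prod_(i <- r) G i x).
Proof.
move=> G_poly; elim: r => [|i r IHr]; first by exists 1 => x; rewrite big_nil hornerC.
have [p prodE] := polyfunM (G_poly i) IHr.
by exists p => x; rewrite big_cons prodE.
Qed.

Lemma polyfun_poch f k : polyfun f -> polyfun (fun x => poch (f x) k).
Proof.
move=> f_poly; apply: polyfun_prod => i.
exact: polyfunD f_poly (polyfun_cst _).
Qed.

Lemma polyfun_eq0 f : polyfun f -> (forall k : nat, f k%:R = 0) -> forall x, f x = 0.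
Proof.
move=> [p fE] f_nat0 x; pose rs := [seq i%:R : R | i <- iota 0 (size p)].
rewrite fE (@roots_geq_poly_eq0 _ p rs) ?horner0 //.
- by apply/allP => _ /mapP [i _ ->]; rewrite /root -fE f_nat0.
- by rewrite map_inj_uniq ?iota_uniq // => i j /eqP; rewrite eqr_nat => /eqP.
- by rewrite size_map size_iota.
Qed.

End PolynomialFunctions.

Lemma polyfun_binom (F : numFieldType) (f : F -> F) m :
  polyfun f -> polyfun (fun x => binom (f x) m).
Proof.
case: m => [k|k] f_poly; last exact: polyfun_cst.
apply: polyfunM (polyfun_cst _); apply: polyfun_poch.
exact: polyfunD (polyfunD f_poly (polyfun_cst _)) (polyfun_cst _).
Qed.

Section BinomialSums.
Variables (F : numFieldType) (a : F).

Definition sumL B n N :=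
  \sum_(k < B) (-1) ^+ k * binom (a + (2 * k)%:R - 1) k * binom N (n%:Z - k%:Z).

Definition sumR B n N :=
  \sum_(j < B) binom N j * binom (a + (2 * n)%:R - 1 - N - j%:R) (n%:Z - (2 * j)%:Z).

Lemma sumL_pascal B n N : sumL B n.+1 (N + 1) = sumL B n.+1 N + sumL B n N.
Proof.
rewrite /sumL -big_split; apply: eq_bigr => k _ /=.
have -> : n.+1%:Z - k%:Z = n%:Z - k%:Z + 1 by lia.
by rewrite binomS; ring.
Qed.

Lemma sumR_pascal B n N : (n.+1 < B)%N ->
  sumR B n.+1 (N + 1) = sumR B n.+1 N - sumR B n N.
Proof.
case: B => [//|B] lt_nB; rewrite /sumR.
pose X (j : nat) := a + (2 * n.+1)%:R - 1 - N - j%:R.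
pose m (j : nat) : int := n.+1%:Z - (2 * j)%:Z.
have pascalN (j : 'I_B.+1) :
    binom (N + 1) j * binom (a + (2 * n.+1)%:R - 1 - (N + 1) - j%:R) (m j)
    = binom N j * binom (X j - 1) (m j) + binom N (j%:Z - 1) * binom (X j - 1) (m j).
  rewrite -mulrDl -[in LHS](subrK 1 j%:Z) binomS subrK /X.
  by congr (_ * binom _ _); ring.
have shift : \sum_(j < B.+1) binom N (j%:Z - 1) * binom (X j - 1) (m j)
    = \sum_(j < B.+1) binom N j * binom (X j - 2%:R) (m j - 2%:R).
  rewrite big_ord_recl binom_neg // mul0r add0r big_ord_recr /=.
  rewrite [binom _ (m B - _)]binom_neg ?mulr0 ?addr0; last by rewrite /m; lia.
  apply: eq_bigr => j _; rewrite /bump add1n.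
  have -> : j.+1%:Z - 1 = j by lia.
  have -> : m j.+1 = m j - 2%:R by rewrite /m; lia.
  by rewrite /X -natr1; congr (_ * binom _ _); ring.
have sumR_n :
    \sum_(j < B.+1) binom N j * binom (a + (2 * n)%:R - 1 - N - j%:R) (n%:Z - (2 * j)%:Z)
    = \sum_(j < B.+1) binom N j * binom (X j - 2%:R) (m j - 1).
  apply: eq_bigr => j _; rewrite /X /m; congr (_ * binom _ _).
  - by rewrite -natr1 !natrM; ring.
  - by lia.
rewrite (eq_bigr _ (fun j _ => pascalN j)) big_split /= shift sumR_n.
rewrite -sumrB -big_split /=; apply: eq_bigr => j _.
by rewrite -mulrDr -mulrBr binom_pascal2.
Qed.

Lemma sumL_0N B N : (0 < B)%N -> sumL B 0 N = 1.
Proof.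
case: B => [//|B] _; rewrite /sumL big_ord_recl big1 ?addr0 => [|k _].
  by rewrite !binom0 !mulr1.
by rewrite [binom N _]binom_neg ?mulr0 // lift0; lia.
Qed.

Lemma sumR_0N B N : (0 < B)%N -> sumR B 0 N = 1.
Proof.
case: B => [//|B] _; rewrite /sumR big_ord_recl big1 ?addr0 => [|j _].
  by rewrite !binom0 mulr1.
by rewrite [binom _ (_ - _)]binom_neg ?mulr0 // lift0; lia.
Qed.

Lemma sumL_n0 B n : (n < B)%N -> sumL B n 0 = (-1) ^+ n * binom (a + (2 * n)%:R - 1) n.
Proof.
move=> lt_nB; rewrite /sumL (bigD1 (Ordinal lt_nB)) //= big1 => [|k neq_kn].
  by rewrite binom0n subrr eqxx mulr1 addr0.
move: neq_kn; rewrite -val_eqE binom0n subr_eq0 eqz_nat eq_sym => /negbTE ->.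
by rewrite mulr0.
Qed.

Lemma sumR_n0 B n : (0 < B)%N -> sumR B n 0 = binom (a + (2 * n)%:R - 1) n.
Proof.
case: B => [//|B] _; rewrite /sumR big_ord_recl big1 => [|j _].
  by rewrite binom0 mul1r !subr0 addr0.
by rewrite binom0n lift0 mul0r.
Qed.

Lemma polyfun_sumL B n : polyfun (sumL B n).
Proof.
apply: polyfun_sum => k; apply: polyfunM (polyfun_cst _) _.
by apply: polyfun_binom; exact: polyfun_id.
Qed.

Lemma polyfun_sumR B n : polyfun (sumR B n).
Proof.
apply: polyfun_sum => j; apply: polyfunM; apply: polyfun_binom; first exact: polyfun_id.
apply: polyfunD; last exact: polyfun_cst.
apply: polyfunD; first exact: polyfun_cst.
by apply: polyfunN; exact: polyfun_id.
Qed.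

Lemma sumL_sumR B n N : (n < B)%N -> sumL B n N = (-1) ^+ n * sumR B n N.
Proof.
elim: n N => [|n IHn] N lt_nB; first by rewrite sumL_0N ?sumR_0N ?mul1r.
pose D x := sumL B n.+1 x - (-1) ^+ n.+1 * sumR B n.+1 x.
apply: subr0_eq; rewrite -/(D N).
apply: polyfun_eq0 => [|k].
  apply: polyfunD (polyfun_sumL _ _) (polyfunN (polyfunM (polyfun_cst _) _)).
  exact: polyfun_sumR.
elim: k => [|k IHk].
  by rewrite /D sumL_n0 // sumR_n0 ?mulrA ?subrr // (leq_ltn_trans _ lt_nB).
rewrite -natr1 /D sumL_pascal sumR_pascal // IHn ?(ltnW lt_nB) //.
by move: IHk; rewrite /D exprS => IHk; rewrite -[RHS]IHk; ring.
Qed.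

End BinomialSums.

Section HypergeometricTerms.
Variables (F : numFieldType) (a c : F) (n : nat).

Lemma termL_binom k : not_nonpos_int a -> not_nonpos_int c ->
  poch c n * hg32_term (- n%:R) (a / 2%:R) ((a + 1) / 2%:R) a c 4%:R k
  = n`!%:R * ((-1) ^+ k * binom (a + (2 * k)%:R - 1) k * binom (c + n%:R - 1) (n%:Z - k%:Z)).
Proof.
move=> a_ok c_ok.
have -> : hg32_term (- n%:R) (a / 2%:R) ((a + 1) / 2%:R) a c 4%:R k
    = poch (- n%:R) k * (poch (a / 2%:R) k * poch ((a + 1) / 2%:R) k * 4%:R ^+ k)
      / (k`!%:R * poch a k * poch c k) by rewrite /hg32_term; ring.
rewrite poch_duplication ?pnatr_eq0 // mul2n -addnn pochD.
have [lt_nk | le_kn] := ltnP n k.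
  by rewrite poch_opp_nat // [binom (c + _ - 1) _]binom_neg ?mul0r ?mulr0 //; lia.
have [m ->] : exists m, n = (k + m)%N by exists (n - k)%N; rewrite subnKC.
have -> : (k + m)%:Z - k%:Z = m by lia.
have -> : a + (k + k)%:R - 1 = a + k%:R + k%:R - 1 by rewrite natrD; ring.
have -> : c + (k + m)%:R - 1 = c + k%:R + m%:R - 1 by rewrite natrD; ring.
have -> : (k + m)`!%:R = poch (m%:R + 1) k * m`!%:R :> F by rewrite poch_fact addnC.
rewrite !binom_poch pochD [poch (- _) _]poch_reflect.
have -> : 1 - - (k + m)%:R - k%:R = m%:R + 1 :> F by rewrite natrD; ring.
have := poch_neq0 k a_ok; have := poch_neq0 k c_ok.
by move=> ? ?; field; rewrite !natr_fact_neq0 /=; apply/andP.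
Qed.

Lemma termR_binom j : not_nonpos_int (c - a - n%:R) -> not_nonpos_int (1 + a - c) ->
  poch (1 + a - c) n * hg32_term (- (n%:R / 2%:R)) ((1 - n%:R) / 2%:R) (1 - c - n%:R)
                                 (c - a - n%:R) (1 + a - c) 4%:R j
  = n`!%:R * (binom (c + n%:R - 1) j
              * binom (a + (2 * n)%:R - 1 - (c + n%:R - 1) - j%:R) (n%:Z - (2 * j)%:Z)).
Proof.
set y := 1 + a - c => can_ok y_ok.
have -> : hg32_term (- (n%:R / 2%:R)) ((1 - n%:R) / 2%:R) (1 - c - n%:R) (c - a - n%:R) y 4%:R j
    = poch (- n%:R / 2%:R) j * poch ((- n%:R + 1) / 2%:R) j * 4%:R ^+ j
      * poch (1 - c - n%:R) j / (j`!%:R * poch (c - a - n%:R) j * poch y j).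
  by rewrite /hg32_term mulNr [1 - _]addrC; ring.
rewrite poch_duplication ?pnatr_eq0 //.
have [lt_n2j | le_2jn] := ltnP n (2 * j).
  by rewrite poch_opp_nat // [binom _ (_ - _)]binom_neg ?mul0r ?mulr0 //; lia.
have [m n_eq] : exists m, n = (j + m + j)%N by exists (n - 2 * j)%N; lia.
have -> : n%:Z - (2 * j)%:Z = m by lia.
have -> : poch (- n%:R) (2 * j) = poch (m%:R + 1) (2 * j) :> F.
  rewrite poch_reflect mul2n -signr_odd odd_double mul1r n_eq -addnn !natrD.
  by congr poch; ring.
have -> : n`!%:R = poch (m%:R + 1) (2 * j) * m`!%:R :> F.
  by rewrite poch_fact n_eq; congr (_`!%:R); lia.
have -> : poch (1 - c - n%:R) j = (-1) ^+ j * poch (c + n%:R - j%:R) j.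
  by rewrite poch_reflect; congr (_ * poch _ _); ring.
have can_reflect : poch (c - a - n%:R) j = (-1) ^+ j * poch (y + (j + m)%:R) j.
  by rewrite poch_reflect; congr (_ * poch _ _); rewrite /y n_eq !natrD; ring.
have -> : c + n%:R - 1 = c + n%:R - j%:R + j%:R - 1 by ring.
have -> : a + (2 * n)%:R - 1 - (c + n%:R - j%:R + j%:R - 1) - j%:R = y + j%:R + m%:R - 1.
  by rewrite /y n_eq mul2n -addnn !natrD; ring.
have -> : poch y n = poch y j * poch (y + j%:R) m * poch (y + (j + m)%:R) j.
  by rewrite n_eq !pochD natrD addrA.
rewrite can_reflect !binom_poch.
have := poch_neq0 j can_ok; rewrite can_reflect mulf_eq0 negb_or => /andP [? ?].
have := poch_neq0 j y_ok => ?.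
by field; rewrite !natr_fact_neq0 /=; apply/and3P.
Qed.

End HypergeometricTerms.

Local Open Scope complex_scope.

Theorem mainTheorem9 (R : realType) (n : nat) (a c : R[i]) :
  not_nonpos_int a -> not_nonpos_int c ->
  not_nonpos_int (c - a - n%:R) -> not_nonpos_int (1 + a - c) ->
  (* both series terminate (all terms of index > n vanish), so the identity
     of the series is the identity of all partial sums with N > n terms *)
  forall N : nat, (n < N)%N ->
  hg32_sum N (- n%:R) (a / 2%:R) ((a + 1) / 2%:R) a c 4%:R
  = ((-1) ^+ n * poch (1 + a - c) n / poch c n)
    * hg32_sum N (- (n%:R / 2%:R)) ((1 - n%:R) / 2%:R) (1 - c - n%:R)
               (c - a - n%:R) (1 + a - c) 4%:R.
Proof.
move=> a_ok c_ok can_ok y_ok N lt_nN.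
set SR := hg32_sum N (- (n%:R / 2%:R)) _ _ _ _ _.
have sumL_hg : poch c n * hg32_sum N (- n%:R) (a / 2%:R) ((a + 1) / 2%:R) a c 4%:R
    = n`!%:R * sumL a N n (c + n%:R - 1).
  by rewrite /hg32_sum /sumL !mulr_sumr; apply: eq_bigr => k _; rewrite termL_binom.
have sumR_hg : poch (1 + a - c) n * SR = n`!%:R * sumR a N n (c + n%:R - 1).
  by rewrite /hg32_sum /sumR !mulr_sumr; apply: eq_bigr => j _; rewrite termR_binom.
have pc_neq0 := poch_neq0 n c_ok.
apply: (mulfI pc_neq0); rewrite sumL_hg sumL_sumR //.
have -> : poch c n * ((-1) ^+ n * poch (1 + a - c) n / poch c n * SR)
    = (-1) ^+ n * (poch (1 + a - c) n * SR) by field.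
by rewrite sumR_hg; ring.
Qed.
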